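(* Let $X\subset\mathbb C^s$ be finite and let $A\subset\mathbb N_0^s$ be a finite set such that $\Pi_A$ is a degree reducing interpolation space for $X$. Then there exists an inner product $(\cdot,\cdot)$ on $\Pi$ such that the set of polynomials that are reduced with respect to $(\cdot,\cdot)$ and the ideal $I_X$ is exactly $\Pi_A$ (i.e. $\Pi_A=r(\Pi)$, the range of the associated reduction/normal form map).
   Context: $\Pi=\mathbb C[x_1,\dots,x_s]$, $\deg$ is total degree with $\deg 0<0$; $\Pi_j^0$ is the space of homogeneous polynomials of degree exactly $j$ (together with $0$). For $A\subset\mathbb N_0^s$, $\Pi_A$ is the span of $x^\alpha$, $\alpha\in A$. $I_X=\{p\in\Pi:p(x)=0\ \forall x\in X\}$. A subspace $\mathcal P\subseteq\Pi$ is a degree reducing interpolation space for $X$ if for every $q\in\Pi$ there is exactly one $p\in\mathcal P$ with $p|_X=q|_X$, and this $p$ satisfies $\deg p\le\deg q$. For $p\neq0$ write $p=\sum_{j=0}^{\deg p}p_j$ with $p_j\in\Pi_j^0$ its homogeneous components, and let $\Lambda(p)=p_{\deg p}$ be its leading form. Given an inner product $(\cdot,\cdot)$ on $\Pi$, a polynomial $p$ is called reduced (with respect to $(\cdot,\cdot)$ and $I_X$) if for every $j$ the component $p_j$ is orthogonal to every leading form $\Lambda(q)$ with $q\in I_X\setminus\{0\}$, $\deg q=j$. *)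

From HB Require Import structures.
From mathcomp Require Import all_boot all_order all_algebra.
From mathcomp Require Import finmap mpoly.
Set Implicit Arguments. Unset Strict Implicit. Unset Printing Implicit Defensive.
Import Order.TTheory GRing.Theory Num.Theory.
Local Open Scope ring_scope.

(* The complex field is modelled by an arbitrary numClosedFieldType C
   (algebraically closed field with conjugation and the induced partial order,
   e.g. algC, or complex R for a real closed R). *)

Definition inner_product (C : numClosedFieldType) (s : nat)
    (ip : {mpoly C[s]} -> {mpoly C[s]} -> C) : Prop :=
  [/\ forall (a : C) (p q r : {mpoly C[s]}), ip (a *: p + q) r = a * ip p r + ip q r,
      forall p q : {mpoly C[s]}, ip p q = (ip q p)^*
    & forall p : {mpoly C[s]}, p != 0 -> 0 < ip p p].

Definition evalpt (C : numClosedFieldType) (s : nat) (x : 'rV[C]_s)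
    (p : {mpoly C[s]}) : C := p.@[fun i => x ord0 i].

Definition in_IX (C : numClosedFieldType) (s : nat) (X : seq 'rV[C]_s)
    (p : {mpoly C[s]}) : Prop :=
  forall x, x \in X -> evalpt x p = 0.

Definition agree_on (C : numClosedFieldType) (s : nat) (X : seq 'rV[C]_s)
    (p q : {mpoly C[s]}) : Prop :=
  forall x, x \in X -> evalpt x p = evalpt x q.

(* Pi_A = span of the monomials x^alpha, alpha in A *)
Definition in_PiA (C : numClosedFieldType) (s : nat) (A : seq 'X_{1..s})
    (p : {mpoly C[s]}) : Prop :=
  {subset msupp p <= A}.

(* Degree reducing interpolation space.  Total degree is encoded by msize
   (msize p = deg p + 1, msize 0 = 0, matching deg 0 < 0). *)
Definition deg_reducing_interp (C : numClosedFieldType) (s : nat)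
    (P : {mpoly C[s]} -> Prop) (X : seq 'rV[C]_s) : Prop :=
  forall q : {mpoly C[s]},
    (exists p, [/\ P p, agree_on X p q & msize p <= msize q]%N) /\
    (forall p1 p2, P p1 -> P p2 -> agree_on X p1 q -> agree_on X p2 q -> p1 = p2).

Definition hcomp (C : numClosedFieldType) (s : nat) (j : nat)
    (p : {mpoly C[s]}) : {mpoly C[s]} :=
  pihomog (@mdeg s) j p.

Definition leadform (C : numClosedFieldType) (s : nat) (p : {mpoly C[s]})
  : {mpoly C[s]} := hcomp (msize p).-1 p.

Definition reduced (C : numClosedFieldType) (s : nat)
    (ip : {mpoly C[s]} -> {mpoly C[s]} -> C) (X : seq 'rV[C]_s)
    (p : {mpoly C[s]}) : Prop :=
  forall (j : nat) (q : {mpoly C[s]}),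
    in_IX X q -> q != 0 -> (msize q).-1 = j ->
    ip (hcomp j p) (leadform q) = 0.

From HB Require Import structures.
From mathcomp Require Import all_boot all_order all_algebra.
From mathcomp Require Import finmap mpoly.
From Stdlib Require Import ClassicalEpsilon.
Set Implicit Arguments. Unset Strict Implicit. Unset Printing Implicit Defensive.
Import Order.TTheory GRing.Theory Num.Theory.
Local Open Scope ring_scope.

(* Let L q be the interpolant of q in Pi_A and let G map each homogeneous
   component p_j of p to (L p_j)_j.  Degree reduction makes G kill the leading
   form of every q in I_X, since L (Lambda q) = L (Lambda q - q) has degree
   < deg q; and G fixes every homogeneous element of Pi_A.  With the
   coefficient inner product <.,.>, take (p, q) := <G p, G q> + <p - G p, q - G q>.
   A homogeneous h in Pi_A is then orthogonal to every leading form of I_X.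
   Conversely, if h = p_j is, then q := h - L h lies in I_X and, unless
   G h = h, has leading form h - G h; orthogonality gives <h - G h, h - G h> = 0,
   so h = G h = (L h)_j lies in Pi_A. *)

Section HomogeneousComponents.
Variables (C : numClosedFieldType) (s : nat).
Implicit Types (p q : {mpoly C[s]}) (m : 'X_{1..s}).

Lemma mcoeff_hcomp j p m : (hcomp j p)@_m = if mdeg m == j then p@_m else 0.
Proof.
have [<-|ne] := eqVneq (mdeg m) j; last exact: dhomog_nemf_coeff (pihomogP _ _ _) ne.
rewrite {2}[p]mpolyE /hcomp pihomogE !raddf_sum /=.
apply: eq_bigl_supp => m'; rewrite inE mcoeffZ mcoeffX.
by case: (m' =P m) => [->|_]; rewrite ?eqxx // mulr0 eqxx.
Qed.

Lemma msupp_hcomp j p m : (m \in msupp (hcomp j p)) = (mdeg m == j) && (m \in msupp p).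
Proof. by rewrite !mcoeff_msupp mcoeff_hcomp; case: (mdeg m =P j); rewrite ?eqxx. Qed.

Lemma hcompK i j p : hcomp i (hcomp j p) = if i == j then hcomp j p else 0.
Proof.
have [->|ij] := eqVneq i j; first exact: pihomog_id.
by apply: pihomog_ne0 (pihomogP _ _ _); rewrite eq_sym.
Qed.

Lemma linear_hcomp j : linear (@hcomp C s j).
Proof. exact: linearP. Qed.

Lemma hcompB j p q : hcomp j (p - q) = hcomp j p - hcomp j q.
Proof. exact: raddfB. Qed.

Lemma msize_le_mdeg k p : (forall m, m \in msupp p -> mdeg m < k)%N -> (msize p <= k)%N.
Proof. by move=> lt_k; rewrite msizeE; apply/bigmax_leqP_seq => m /lt_k. Qed.

Lemma msize_hcomp j p : (msize (hcomp j p) <= j.+1)%N.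
Proof. by apply: msize_le_mdeg => m; rewrite msupp_hcomp => /andP[/eqP-> _]. Qed.

Lemma hcomp_default j p : (msize p <= j)%N -> hcomp j p = 0.
Proof.
move=> le_p_j; apply/mpolyP => m; rewrite mcoeff_hcomp mcoeff0.
case: eqP => // deg_m; apply/eqP; rewrite -[_ == 0]negbK -mcoeff_msupp.
by apply: msize_mdeg_ge; rewrite deg_m.
Qed.

Lemma msize_sub_leadform p : (msize (p - leadform p) <= (msize p).-1)%N.
Proof.
apply: msize_le_mdeg => m; rewrite mcoeff_msupp mcoeffB mcoeff_hcomp.
case: (mdeg m =P _) => [_|deg_m]; first by rewrite subrr eqxx.
rewrite subr0 -mcoeff_msupp => /msize_mdeg_lt.
by case: (msize p) deg_m => // k deg_m; rewrite ltnS leq_eqVlt => /predU1P[].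
Qed.

End HomogeneousComponents.

Section CoefficientInnerProduct.
Variables (C : numClosedFieldType) (s : nat).
Implicit Types (p q r : {mpoly C[s]}).

Definition mdot p q : C := \sum_(m <- msupp p) p@_m * (q@_m)^*.

Lemma mdotE (ms : seq 'X_{1..s}) p q : uniq ms -> {subset msupp p <= ms} ->
  mdot p q = \sum_(m <- ms) p@_m * (q@_m)^*.
Proof.
move=> uniq_ms supp_p; apply: perm_big_supp; apply: uniq_perm; rewrite ?filter_uniq //.
move=> m; rewrite !mem_filter; case: eqP => //= /eqP.
by rewrite mulf_eq0 negb_or mcoeff_msupp => /andP[pm _]; rewrite pm supp_p ?mcoeff_msupp.
Qed.

Lemma mdotDZl a p q r : mdot (a *: p + q) r = a * mdot p r + mdot q r.
Proof.
set S := undup (msupp p ++ msupp q ++ msupp (a *: p + q)).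
have [Sp Sq Spq] : [/\ {subset msupp p <= S}, {subset msupp q <= S}
                     & {subset msupp (a *: p + q) <= S}].
  by split=> m m_in; rewrite mem_undup !mem_cat m_in ?orbT.
have uniq_S : uniq S by apply: undup_uniq.
rewrite (mdotE _ uniq_S Sp) (mdotE _ uniq_S Sq) (mdotE _ uniq_S Spq).
rewrite mulr_sumr -big_split; apply: eq_bigr => m _ /=.
by rewrite mcoeffD mcoeffZ mulrDl mulrA.
Qed.

Lemma mdotC p q : mdot p q = (mdot q p)^*.
Proof.
set S := undup (msupp p ++ msupp q).
have [Sp Sq] : {subset msupp p <= S} /\ {subset msupp q <= S}.
  by split=> m m_in; rewrite mem_undup mem_cat m_in ?orbT.
have uniq_S : uniq S by apply: undup_uniq.
rewrite (mdotE _ uniq_S Sp) (mdotE _ uniq_S Sq) rmorph_sum.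
by apply: eq_bigr => m _; rewrite rmorphM /= conjCK mulrC.
Qed.

Lemma mdot0l p : mdot 0 p = 0.
Proof. by rewrite /mdot msupp0 big_nil. Qed.

Lemma mdot0r p : mdot p 0 = 0.
Proof. by rewrite mdotC mdot0l conjC0. Qed.

Lemma mdot_ge0 p : 0 <= mdot p p.
Proof. by apply: sumr_ge0 => m _; apply: mul_conjC_ge0. Qed.

Lemma mdot_eq0 p : (mdot p p == 0) = (p == 0).
Proof.
apply/idP/eqP => [|->]; last by rewrite mdot0l.
rewrite psumr_eq0 => [/allP p0|m _]; last exact: mul_conjC_ge0.
apply/mpolyP => m; rewrite mcoeff0; apply/eqP.
have [/p0 /=|] := boolP (m \in msupp p); first by rewrite mul_conjC_eq0.
by rewrite mcoeff_msupp negbK.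
Qed.

Definition split_mdot (f : {mpoly C[s]} -> {mpoly C[s]}) p q : C :=
  mdot (f p) (f q) + mdot (p - f p) (q - f q).

Lemma split_mdot_inner_product f : linear f -> inner_product (split_mdot f).
Proof.
move=> lin_f; split.
- move=> a p q r; rewrite /split_mdot lin_f.
  have -> : a *: p + q - (a *: f p + f q) = a *: (p - f p) + (q - f q).
    by rewrite opprD addrACA scalerBr.
  by rewrite !mdotDZl mulrDr addrACA.
- by move=> p q; rewrite /split_mdot rmorphD /= -!mdotC.
- move=> p p_nz; rewrite /split_mdot lt_def paddr_eq0 ?addr_ge0 ?mdot_ge0 // andbT.
  rewrite !mdot_eq0 subr_eq0; apply: contra p_nz => /andP[/eqP f0 /eqP ->].
  by rewrite f0.
Qed.

Lemma split_mdot_ker f p q : f q = 0 -> split_mdot f p q = mdot (p - f p) q.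
Proof. by move=> f0; rewrite /split_mdot f0 mdot0r add0r subr0. Qed.

End CoefficientInnerProduct.

Section InterpolationSpace.
Variables (C : numClosedFieldType) (s : nat) (X : seq 'rV[C]_s) (A : seq 'X_{1..s}).
Implicit Types (p q : {mpoly C[s]}).

Lemma evalptB (x : 'rV[C]_s) p q : evalpt x (p - q) = evalpt x p - evalpt x q.
Proof. exact: mevalB. Qed.

Lemma evalptDZ (x : 'rV[C]_s) a p q :
  evalpt x (a *: p + q) = a * evalpt x p + evalpt x q.
Proof. by rewrite /evalpt mevalD mevalZ. Qed.

Lemma in_PiA0 : in_PiA A (0 : {mpoly C[s]}).
Proof. by move=> m; rewrite msupp0. Qed.

Lemma in_PiA_lin a p q : in_PiA A p -> in_PiA A q -> in_PiA A (a *: p + q).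
Proof. by move=> pA qA m /msuppD_le; rewrite mem_cat => /orP[/msuppZ_le/pA|/qA]. Qed.

Lemma in_PiA_hcomp j p : in_PiA A p -> in_PiA A (hcomp j p).
Proof. by move=> pA m; rewrite msupp_hcomp => /andP[_ /pA]. Qed.

Hypothesis deg_red : deg_reducing_interp (in_PiA A) X.

Definition interp q : {mpoly C[s]} :=
  proj1_sig (constructive_indefinite_description _ (proj1 (deg_red q))).

Lemma interpP q :
  [/\ in_PiA A (interp q), agree_on X (interp q) q & (msize (interp q) <= msize q)%N].
Proof. by rewrite /interp; case: constructive_indefinite_description. Qed.

Lemma interp_unique p q : in_PiA A p -> agree_on X p q -> interp q = p.
Proof. by have [iA iX _] := interpP q; move=> pA pX; apply: (proj2 (deg_red q)) pX. Qed.

Lemma interp_id p : in_PiA A p -> interp p = p.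
Proof. by move=> pA; apply: interp_unique. Qed.

Lemma interp_agree q1 q2 : agree_on X q1 q2 -> interp q1 = interp q2.
Proof.
have [iA iX _] := interpP q2.
by move=> q12; apply: interp_unique => // x x_X; rewrite iX // q12.
Qed.

Lemma linear_interp : linear interp.
Proof.
move=> a p q; have [pA pX _] := interpP p; have [qA qX _] := interpP q.
apply: interp_unique; first exact: in_PiA_lin.
by move=> x x_X; rewrite !evalptDZ pX // qX.
Qed.

Definition graded_interp p : {mpoly C[s]} :=
  \sum_(j < msize p) hcomp j (interp (hcomp j p)).

Lemma graded_interpE n p : (msize p <= n)%N ->
  graded_interp p = \sum_(j < n) hcomp j (interp (hcomp j p)).
Proof.
move=> le_p_n; rewrite /graded_interp.
rewrite (big_ord_widen _ (fun j => hcomp j (interp (hcomp j p))) le_p_n) big_mkcond.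
apply: eq_bigr => j _; case: ltnP => // /hcomp_default ->.
by rewrite interp_id ?hcomp_default ?mmeasure0 //; apply: in_PiA0.
Qed.

Lemma linear_graded_interp : linear graded_interp.
Proof.
move=> a p q; set n := maxn (msize (a *: p + q)) (maxn (msize p) (msize q)).
have [le_apq le_p le_q] :
    [/\ msize (a *: p + q) <= n, msize p <= n & msize q <= n]%N.
  by rewrite /n !leq_max !leqnn !orbT.
rewrite !(graded_interpE le_apq, graded_interpE le_p, graded_interpE le_q).
rewrite scaler_sumr -big_split.
by apply: eq_bigr => j _; rewrite !linear_hcomp linear_interp linear_hcomp.
Qed.

Lemma graded_interp_hcomp j p : graded_interp (hcomp j p) = hcomp j (interp (hcomp j p)).
Proof.
rewrite (graded_interpE (msize_hcomp j p)) (bigD1 (Ordinal (ltnSn j))) //= hcompK eqxx.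
rewrite big1 ?addr0 // => i ne_ij; rewrite hcompK ifN; last first.
  by apply: contra ne_ij => /eqP eq_ij; apply/eqP/val_inj.
by rewrite interp_id ?hcomp_default ?mmeasure0 //; apply: in_PiA0.
Qed.

Lemma graded_interp_leadform q : in_IX X q -> graded_interp (leadform q) = 0.
Proof.
move=> qX; rewrite /leadform graded_interp_hcomp.
have -> : interp (hcomp (msize q).-1 q) = interp (leadform q - q).
  by apply: interp_agree => x x_X; rewrite evalptB qX // subr0.
apply: hcomp_default; have [_ _ /leq_trans] := interpP (leadform q - q); apply.
by rewrite -opprB mmeasureN msize_sub_leadform.
Qed.

Local Notation ip := (split_mdot graded_interp).

Lemma PiA_reduced p : in_PiA A p -> reduced ip X p.
Proof.
move=> pA j q qX _ _; rewrite split_mdot_ker ?graded_interp_leadform //.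
by rewrite graded_interp_hcomp (interp_id (in_PiA_hcomp pA)) hcompK eqxx subrr mdot0l.
Qed.

Lemma in_IX_sub_interp q : in_IX X (q - interp q).
Proof. by have [_ iX _] := interpP q; move=> x x_X; rewrite evalptB iX // subrr. Qed.

Lemma msize_sub_interp_hcomp j p : graded_interp (hcomp j p) != hcomp j p ->
  msize (hcomp j p - interp (hcomp j p)) = j.+1.
Proof.
move=> ne_h; have [_ _ le_i] := interpP (hcomp j p).
apply/eqP; rewrite eqn_leq; apply/andP; split.
  rewrite (leq_trans (msizeD_le _ _)) // msizeN geq_max msize_hcomp.
  exact: leq_trans le_i (msize_hcomp _ _).
rewrite ltnNge; apply: contra ne_h => /hcomp_default.
by rewrite hcompB hcompK eqxx graded_interp_hcomp => /eqP; rewrite subr_eq0 eq_sym.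
Qed.

Lemma reduced_hcomp_fixed p j : reduced ip X p -> graded_interp (hcomp j p) = hcomp j p.
Proof.
move=> red; apply/eqP; apply: contraT => ne_h.
have size_q := msize_sub_interp_hcomp ne_h.
set h := hcomp j p in ne_h size_q *; set q := h - interp h in size_q *.
have lead_q : leadform q = h - graded_interp h.
  by rewrite /leadform size_q hcompB /h hcompK eqxx graded_interp_hcomp.
have q_nz : q != 0 by rewrite -msize_poly_eq0 size_q.
have qX : in_IX X q := in_IX_sub_interp h.
have Glead_q := graded_interp_leadform qX; rewrite lead_q in Glead_q.
have := red j q qX q_nz; rewrite size_q -/h lead_q => /(_ erefl).
rewrite split_mdot_ker // => /eqP.
by rewrite mdot_eq0 subr_eq0 eq_sym (negbTE ne_h).
Qed.

Lemma reduced_PiA p : reduced ip X p -> in_PiA A p.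
Proof.
move=> red m m_p.
have : m \in msupp (hcomp (mdeg m) p) by rewrite msupp_hcomp eqxx.
rewrite -(reduced_hcomp_fixed _ red) graded_interp_hcomp.
by have [hA _ _] := interpP (hcomp (mdeg m) p); apply: in_PiA_hcomp hA _.
Qed.

End InterpolationSpace.

Theorem lemma37 (C : numClosedFieldType) (s : nat) (X : seq 'rV[C]_s)
    (A : seq 'X_{1..s}) :
  deg_reducing_interp (in_PiA (C := C) A) X ->
  exists ip : {mpoly C[s]} -> {mpoly C[s]} -> C,
    inner_product ip /\ (forall p, reduced ip X p <-> in_PiA A p).
Proof.
move=> deg_red; exists (split_mdot (graded_interp deg_red)); split.
  exact/split_mdot_inner_product/linear_graded_interp.
by move=> p; split; [apply: reduced_PiA | apply: PiA_reduced].
Qed.
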